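(* Let $\Psi\subseteq\Omega$ be nonempty, $D=D(\Psi)$, let $\mathcal{G}_\Psi$ be a Gröbner basis of $Z_\Psi$, and let $\mathcal{E}:V_D\to V_A$ be the associated extension map. Then the composition $\mathcal{C}=\mathcal{R}\circ\mathcal{F}^{-1}\circ\mathcal{E}:V_D\to V_\Psi$ is an isomorphism of $\mathbb{F}_q$-vector spaces; in fact $\mathcal{C}$ is the inverse of the proper transform $\mathcal{P}:V_\Psi\to V_D$, $(c_{\underline\psi})_\Psi\mapsto\big(\sum_{\underline\psi\in\Psi}c_{\underline\psi}\underline\psi^{\underline d}\big)_{\underline d\in D}$. Moreover, for every $(c_{\underline\omega})_\Omega\in\mathcal{F}^{-1}(\mathcal{E}(V_D))$ one has $c_{\underline\omega}=0$ for all $\underline\omega\in\Omega\setminus\Psi$.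
   Context: Let $q$ be a prime power, $N\ge1$, $A=\{0,1,\dots,q-1\}^N$, $\Omega=\mathbb{F}_q^N$. For a finite set $S$, $V_S$ is the $\mathbb{F}_q$-vector space of vectors $(v_s)_{s\in S}$. Write $\underline\omega^{\underline a}=\omega_1^{a_1}\cdots\omega_N^{a_N}$ with $0^0=1$. Generalized IDFT $\mathcal{F}^{-1}:V_A\to V_\Omega$: $(h_{\underline a})_A\mapsto(c_{\underline\omega})_\Omega$ where, with $I=\{i:\omega_i\ne0\}=\{i_1<\dots<i_m\}$, $c_{\underline\omega}=(-1)^m\sum_{l_1,\dots,l_m=1}^{q-1}\{\sum_{J\subseteq\{1,\dots,N\}\setminus I}(-1)^{|J|}h_{\underline i(I,J)}\}\omega_{i_1}^{-l_1}\cdots\omega_{i_m}^{-l_m}$, and $\underline i(I,J)=(b_1,\dots,b_N)$ with $b_{i_j}=l_j$, $b_i=q-1$ for $i\in J$, $b_i=0$ otherwise; it is the inverse of the generalized DFT $(c_{\underline\omega})_\Omega\mapsto(\sum_{\underline\omega\in\Omega}c_{\underline\omega}\underline\omega^{\underline a})_A$. $\mathcal{R}:V_\Omega\to V_\Psi$ is restriction of coordinates to $\Psi$. Fix a monomial order $\preceq$ on $\mathbb{F}_q[x_1,\dots,x_N]$. $Z_\Psi$ is the ideal of polynomials vanishing on $\Psi$; the delta set $D(\Psi)$ is the set of $\underline d\in\mathbb{N}_0^N$ such that $\underline x^{\underline d}$ is not the leading monomial of any nonzero element of $Z_\Psi$ ($D(\Psi)\subseteq A$). The extension map $\mathcal{E}:V_{D(\Psi)}\to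 V_A$ sends $(h_{\underline d})$ to $(h_{\underline a})_A$ with $h_{\underline a}=\sum_{\underline d\in D(\Psi)}v^{(\underline a)}_{\underline d}h_{\underline d}$, where $\sum_{\underline d}v^{(\underline a)}_{\underline d}\underline x^{\underline d}$ is the remainder of $\underline x^{\underline a}$ on division by $\mathcal{G}_\Psi$. *)

From HB Require Import structures.
From mathcomp Require Import all_boot all_order all_algebra.
From Stdlib Require Import ClassicalDescription.
Set Implicit Arguments. Unset Strict Implicit. Unset Printing Implicit Defensive.
Import Order.TTheory GRing.Theory Num.Theory.
Local Open Scope ring_scope.

Definition pbool (P : Prop) : bool :=
  if excluded_middle_informative P then true else false.

Section Defs.
Variables (F : finFieldType) (N : nat).

Definition mexp := {ffun 'I_N -> nat}.
Definition mexp_add (a b : mexp) : mexp := [ffun i => (a i + b i)%N].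
Definition mexp0 : mexp := [ffun _ => 0%N].
Definition mdiv (d e : mexp) : Prop := forall i, (d i <= e i)%N.

(* a polynomial is a finite formal sum of terms c * x^e (a list of terms);
   polynomials are compared through their coefficient functions *)
Definition mpoly := seq (F * mexp).
Definition coefp (p : mpoly) (e : mexp) : F := \sum_(t <- p | t.2 == e) t.1.
Definition pmul (p r : mpoly) : mpoly :=
  [seq (t.1 * s.1, mexp_add t.2 s.2) | t <- p, s <- r].
Definition monom (e : mexp) : mpoly := [:: (1, e)].
Definition peval (p : mpoly) (w : 'I_N -> F) : F :=
  \sum_(t <- p) t.1 * \prod_(i < N) w i ^+ t.2 i.
Definition pnonzero (p : mpoly) : Prop := exists e, coefp p e != 0.
Definition lincomb (qs G : seq mpoly) : mpoly :=
  flatten [seq pmul pr.1 pr.2 | pr <- zip qs G].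

Definition monomial_order (le : rel mexp) : Prop :=
  [/\ reflexive le, antisymmetric le, transitive le, total le &
   [/\ 
(forall a b c, le a b -> le (mexp_add a c) (mexp_add b c))
    & (forall a, le mexp0 a)]].

Definition is_LM (le : rel mexp) (p : mpoly) (d : mexp) : Prop :=
  coefp p d != 0 /\ (forall e, coefp p e != 0 -> le e d).

Definition Om := {ffun 'I_N -> F}.
Definition vanishes (Psi : {set Om}) (p : mpoly) : Prop :=
  forall w, w \in Psi -> peval p w = 0.

Definition groebner (le : rel mexp) (Psi : {set Om}) (G : seq mpoly) : Prop :=
  [/\ (forall g, g \in G -> vanishes Psi g),
      (forall g, g \in G -> pnonzero g)
    & (forall f d, vanishes Psi f -> is_LM le f d ->
         exists2 g, g \in G & exists2 dg, is_LM le g dg & mdiv dg d)].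

Definition is_remainder (le : rel mexp) (G : seq mpoly) (f r : mpoly) : Prop :=
  (exists2 qs : seq mpoly, size qs = size G &
     forall e, coefp f e = coefp (lincomb qs G ++ r) e) /\
  (forall e, coefp r e != 0 -> forall g, g \in G ->
     forall dg, is_LM le g dg -> ~ mdiv dg e).

Definition q := #|F|.
Definition A := {ffun 'I_N -> 'I_q}.
Definition toexp (a : A) : mexp := [ffun i => nat_of_ord (a i)].

Lemma qm1_lt : (q.-1 < q)%N.
Proof. by rewrite ltn_predL; apply/card_gt0P; exists 0. Qed.
Definition qm1 : 'I_q := Ordinal qm1_lt.
Lemma q_gt0 : (0 < q)%N.
Proof. by apply/card_gt0P; exists 0. Qed.
Definition q0 : 'I_q := Ordinal q_gt0.

(* delta set D(Psi) (as a subset of A, where it is contained) *)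
Definition Dset (le : rel mexp) (Psi : {set Om}) : {set A} :=
  [set d : A | pbool (~ exists f : mpoly,
        vanishes Psi f /\ is_LM le f (toexp d))].

Definition DT le Psi := {d : A | d \in Dset le Psi}.
Definition PsiT (Psi : {set Om}) := {w : Om | w \in Psi}.

Definition bidx (I J : {set 'I_N}) (l : A) : A :=
  [ffun i => if i \in I then l i else if i \in J then qm1 else q0].

Definition IDFT (h : A -> F) (w : Om) : F :=
  let I := [set i | w i != 0] in
  (-1) ^+ #|I| *
  \sum_(l : A | [forall i, (nat_of_ord (l i) == 0%N) == (i \notin I)])
     ((\sum_(J : {set 'I_N} | J \subset ~: I) (-1) ^+ #|J| * h (bidx I J l))
      * \prod_(i in I) (w i ^+ l i)^-1).

(* v a d = coefficient of x^d in the remainder of x^a *)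
Definition rempoly le Psi (v : A -> DT le Psi -> F) (a : A) : mpoly :=
  [seq (v a d, toexp (val d)) | d <- enum [set: DT le Psi]].

Definition Ext le Psi (v : A -> DT le Psi -> F) (h : DT le Psi -> F) (a : A) : F :=
  \sum_(d : DT le Psi) v a d * h d.

Definition Restr Psi (c : Om -> F) (s : PsiT Psi) : F := c (val s).

Definition Cmap le Psi (v : A -> DT le Psi -> F) (h : DT le Psi -> F) : PsiT Psi -> F :=
  Restr (IDFT (Ext v h)).

Definition Proper le Psi (c : PsiT Psi -> F) (d : DT le Psi) : F :=
  \sum_(s : PsiT Psi) c s * \prod_(i < N) (val s i) ^+ (val d i).

End Defs.

(* For u in Omega, F^{-1} sends the vector (u^a)_(a in A) of
   monomial values at u to the indicator vector of u (IDFT_mon); this rests on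
   two finite-field sums, 1 - x^(q-1) = [x = 0] and the geometric sum
   -sum_(0<j<q) x^j = [x = 1].  On Psi the remainder of x^a modulo the
   Groebner basis takes the value u^a, so E(P c) = sum_s c_s (s^a)_a and
   F^{-1}(E(P c)) is c extended by zero: this gives C o P = id.  By the
   definition of the delta set, a polynomial sum_(d in D) h_d x^d vanishing on
   Psi is zero; hence evaluation on Psi embeds V_D into V_Psi, so
   #|V_D| <= #|V_Psi| and the injective map P is a bijection.  Writing
   h = P c then yields P o C = id and the vanishing of F^{-1}(E h) off Psi. *)

From Pilot Require Import Defs.
From mathcomp Require Import all_boot all_algebra all_fingroup all_solvable all_field.
From mathcomp Require Import ring.
From Stdlib Require Import ClassicalDescription.
Import GRing.Theory.
Local Open Scope ring_scope.
Set Implicit Arguments. Unset Strict Implicit.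

Section FiniteFieldSums.
Variable F : finFieldType.

(* The characteristic of F divides q = #|F|: the additive group of F has order q. *)
Lemma natr_card : (q F)%:R = 0 :> F.
Proof. by rewrite /q -cardsT -FinRing.zmodXgE expg_cardG ?inE. Qed.

(* u^(q-1) is 1 on units and 0 at 0, so 1 - u^(q-1) is the indicator of 0. *)
Lemma indicator_zero (u : F) : 1 - u ^+ (q F).-1 = (u == 0)%:R.
Proof.
have q_gt1 : (1 < q F)%N := finNzRing_gt1 F.
have [->|u0] := eqVneq u 0; first by rewrite expr0n -(subnKC q_gt1) subr0.
suff -> : u ^+ (q F).-1 = 1 by rewrite subrr.
by apply: (mulfI u0); rewrite mulr1 -exprS prednK ?expf_card // ltnW.
Qed.

(* Geometric sums of length q: since x^q = x, they vanish exactly at x = 1. *)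
Lemma sum_powers_card (x : F) : \sum_(j < q F) x ^+ j = (x != 1)%:R.
Proof.
have [->|x1] := eqVneq x 1.
  by under eq_bigr do rewrite expr1n; rewrite sumr_const card_ord natr_card.
have x1' : x - 1 != 0 by rewrite subr_eq0.
by apply: (mulfI x1'); rewrite -subrX1 expf_card mulr1.
Qed.

Lemma sum_nonzero_powers (u w : F) : w != 0 ->
  - \sum_(j < q F | j != 0%N :> nat) (u / w) ^+ j = (u == w)%:R.
Proof.
move=> w0; have := sum_powers_card (u / w).
rewrite (bigD1 (q0 F)) //= expr0 => /(canRL (addKr 1)) ->.
have -> : (u / w == 1) = (u == w).
  by apply/eqP/eqP => [/divr1_eq//|->]; rewrite divff.
by case: (u == w); rewrite /= ?addr0 ?addNr ?opprK ?oppr0.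
Qed.

End FiniteFieldSums.

Section InverseDFT.
Variables (F : finFieldType) (N : nat).

Definition mon (u : Om F N) (a : A F N) : F := \prod_(i < N) u i ^+ a i.

Lemma alternating_sum_mon (I : {set 'I_N}) (l : A F N) (u : Om F N) :
  \sum_(J : {set 'I_N} | J \subset ~: I) (-1) ^+ #|J| * mon u (bidx I J l)
  = \prod_(i < N) (if i \in I then u i ^+ l i else 1 - u i ^+ (q F).-1).
Proof.
have -> : \prod_(i < N) (if i \in I then u i ^+ l i else 1 - u i ^+ (q F).-1)
  = \prod_(i < N) ((if i \in I then 0 else - u i ^+ (q F).-1) +
                   (if i \in I then u i ^+ l i else 1)).
  by apply: eq_bigr => i _; case: ifP; rewrite ?add0r // addrC.
rewrite bigA_distr [RHS](bigID (fun J : {set 'I_N} => J \subset ~: I)) /=.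
rewrite [X in _ = _ + X]big1 ?addr0; last first.
  move=> J /subsetPn [i iJ]; rewrite in_setC negbK => iI.
  by rewrite (bigD1 i) //= iJ iI mul0r.
apply: eq_bigr => J JI.
rewrite -prodr_const big_mkcond /= /mon -big_split /=.
apply: eq_bigr => i _; rewrite /bidx ffunE.
case: (boolP (i \in I)) => iI.
  have -> : (i \in J) = false.
    by apply/negP => iJ; move/subsetP: JI => /(_ i iJ); rewrite in_setC iI.
  by rewrite mul1r.
by case: (i \in J); rewrite ?mul1r ?expr0 // mulN1r.
Qed.

(* Key identity: F^{-1} maps the vector of monomial values at u to the
   indicator vector of u.  The sum over l factors coordinatewise, and each
   coordinate contributes the indicator of u_i = w_i. *)
Lemma IDFT_mon (u w : Om F N) : IDFT (mon u) w = (u == w)%:R.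
Proof.
rewrite /IDFT /=; set I := [set i | w i != 0].
pose Q (i : 'I_N) (j : 'I_(q F)) := ((j : nat) == 0%N) == (i \notin I).
pose H i (j : 'I_(q F)) :=
  if i \in I then (u i / w i) ^+ j else 1 - u i ^+ (q F).-1.
have summand (l : A F N) :
    (\sum_(J : {set 'I_N} | J \subset ~: I) (-1) ^+ #|J| * mon u (bidx I J l))
    * \prod_(i in I) (w i ^+ l i)^-1 = \prod_(i < N) H i (l i).
  rewrite alternating_sum_mon [X in _ * X]big_mkcond -big_split /=.
  apply: eq_bigr => i _; rewrite /H.
  by case: ifP; rewrite ?mulr1 // exprMn exprVn.
have coord i : (if i \in I then -1 else 1) * \sum_(j | Q i j) H i j
               = (u i == w i)%:R :> F.
  rewrite /Q /H; case: (boolP (i \in I)) => iI /=.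
    rewrite mulN1r (eq_bigl (fun j : 'I_(q F) => j != 0%N :> nat)).
      by rewrite sum_nonzero_powers //; move: iI; rewrite inE.
    by move=> j; rewrite eqbF_neg.
  rewrite mul1r (big_pred1 (q0 F)); last by move=> j; rewrite /= eqb_id.
  by move: iI; rewrite inE negbK => /eqP ->; apply: indicator_zero.
under eq_bigr do rewrite summand.
rewrite (eq_bigl (fun l : A F N => l \in family Q)); last first.
  by move=> l; apply/forallP/familyP.
rewrite -(bigA_distr_big_dep Q H) -prodr_const big_mkcond -big_split /=.
under eq_bigr do rewrite coord.
have [<-|neq] := eqVneq u w; first by rewrite big1 // => i _; rewrite eqxx.
have [i uiw] : exists i, u i != w i.
  by apply/existsP; apply: contraNT neq => /existsPn eq_uw; apply/eqP/ffunP => i; apply/eqP/negPn.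
by rewrite (bigD1 i) //= (negbTE uiw) mul0r.
Qed.

Lemma IDFT_ext (h1 h2 : A F N -> F) (w : Om F N) :
  (forall a, h1 a = h2 a) -> IDFT h1 w = IDFT h2 w.
Proof.
move=> e; rewrite /IDFT /=; congr (_ * _); apply: eq_bigr => l _; congr (_ * _).
by apply: eq_bigr => J _; rewrite e.
Qed.

Lemma IDFT_sum (X : finType) (g : X -> F) (f : X -> A F N -> F) (w : Om F N) :
  IDFT (fun a => \sum_(x : X) g x * f x a) w = \sum_(x : X) g x * IDFT (f x) w.
Proof.
rewrite /IDFT /=; symmetry.
under eq_bigr do rewrite mulrCA mulr_sumr.
rewrite -mulr_sumr exchange_big /=; congr (_ * _); apply: eq_bigr => l _.
under eq_bigr do rewrite mulrA.
rewrite -mulr_suml; congr (_ * _).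
under eq_bigr do rewrite mulr_sumr.
rewrite exchange_big /=; apply: eq_bigr => J _.
by rewrite mulr_sumr; apply: eq_bigr => x _; rewrite mulrCA.
Qed.

Lemma IDFT_lin (k : F) (h1 h2 : A F N -> F) (w : Om F N) :
  IDFT (fun a => k * h1 a + h2 a) w = k * IDFT h1 w + IDFT h2 w.
Proof.
have := IDFT_sum (fun b : bool => if b then k else 1)
                 (fun b => if b then h1 else h2) w.
rewrite big_bool /= mul1r => <-; apply: IDFT_ext => a.
by rewrite big_bool /= mul1r.
Qed.

End InverseDFT.

Section PolynomialEvaluation.
Variables (F : finFieldType) (N : nat).
Implicit Types (p r : mpoly F N) (w : Om F N).

Lemma peval_coef p w (s : seq (mexp N)) :
  uniq s -> (forall t, t \in p -> t.2 \in s) ->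
  peval p w = \sum_(e <- s) Defs.coefp p e * \prod_(i < N) w i ^+ e i.
Proof.
move=> us ps; rewrite /Defs.coefp.
under [RHS]eq_bigr do rewrite mulr_suml big_mkcond.
rewrite [RHS]exchange_big /= /peval big_seq_cond [RHS]big_seq_cond.
apply: eq_bigr => t /andP [tp _].
rewrite [RHS](big_rem (t.2)); last exact: ps.
rewrite eqxx [X in _ = _ + X]big1_seq ?addr0 // => e /andP [_].
by rewrite (mem_rem_uniq _ us) inE => /andP [ne _]; rewrite eq_sym (negbTE ne).
Qed.

Lemma peval_eqcoef p r w :
  (forall e, Defs.coefp p e = Defs.coefp r e) -> peval p w = peval r w.
Proof.
move=> h; pose s := undup (map snd (p ++ r)).
have us : uniq s := undup_uniq _.
have sP (pr : mpoly F N) : {subset pr <= p ++ r} -> forall t, t \in pr -> t.2 \in s.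
  by move=> sub t tpr; rewrite mem_undup; apply: map_f; apply: sub.
rewrite (peval_coef w us (sP p _)); last by move=> x; rewrite mem_cat => ->.
rewrite (peval_coef w us (sP r _)); last by move=> x; rewrite mem_cat orbC => ->.
by apply: eq_bigr => e _; rewrite h.
Qed.

Lemma peval_cat p r w : peval (p ++ r) w = peval p w + peval r w.
Proof. by rewrite /peval big_cat. Qed.

Lemma peval_pmul p r w : peval (pmul p r) w = peval p w * peval r w.
Proof.
rewrite /peval /pmul big_allpairs_dep /= mulr_suml; apply: eq_bigr => t _.
rewrite mulr_sumr; apply: eq_bigr => s _ /=.
rewrite (eq_bigr (fun i => w i ^+ t.2 i * w i ^+ s.2 i)); last first.
  by move=> i _; rewrite /mexp_add ffunE exprD.
by rewrite big_split /=; ring.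
Qed.

Lemma peval_lincomb (qs G : seq (mpoly F N)) w :
  (forall g, g \in G -> peval g w = 0) -> peval (lincomb qs G) w = 0.
Proof.
elim: G qs => [|g G IH] [|q1 qs] vanG; rewrite /lincomb /=;
  try by rewrite /peval big_nil.
rewrite peval_cat peval_pmul (vanG g) ?mem_head // mulr0 add0r.
by apply: (IH qs) => g' g'G; apply: vanG; rewrite in_cons g'G orbT.
Qed.

End PolynomialEvaluation.

Lemma exists_max (T : eqType) (K : Type) (key : T -> K) (le : rel K) :
  transitive le -> total le -> forall (s : seq T) (x0 : T), x0 \in s ->
  exists2 x, x \in s & forall y, y \in s -> le (key y) (key x).
Proof.
move=> le_tr le_tot; elim=> // x s IH _ _.
have le_refl z : le z z by case/orP: (le_tot z z).
case: s IH => [_|x1 s IH].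
  by exists x => [|y]; rewrite ?mem_head // inE => /eqP ->.
have [m ms mmax] := IH x1 (mem_head x1 s).
case/orP: (le_tot (key x) (key m)) => le_xm.
  exists m => [|y]; first by rewrite in_cons ms orbT.
  by rewrite in_cons => /orP [/eqP ->|]; last exact: mmax.
exists x => [|y]; first exact: mem_head.
by rewrite in_cons => /orP [/eqP ->|/mmax le_ym] //; exact: le_tr le_ym le_xm.
Qed.

Section DeltaPolynomials.
Variables (F : finFieldType) (N : nat) (le : rel (mexp N)) (Psi : {set Om F N}).
Implicit Types (h : DT le Psi -> F) (d : DT le Psi).

Definition dpoly h : mpoly F N :=
  [seq (h d, toexp (val d)) | d <- enum [set: DT le Psi]].

Lemma toexp_inj : injective (@toexp F N).
Proof.
move=> a b /ffunP eq_ab; apply/ffunP => i; apply: val_inj.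
by have := eq_ab i; rewrite !ffunE.
Qed.

Lemma coef_dpoly h e :
  Defs.coefp (dpoly h) e = \sum_(d | toexp (val d) == e) h d.
Proof.
by rewrite /Defs.coefp big_map big_enum_cond /=; apply: eq_bigl => d; rewrite inE.
Qed.

(* Distinct elements of D give distinct monomials, so the coefficient of x^d
   is h_d, and every monomial with a nonzero coefficient is such an x^d. *)
Lemma coef_dpoly_val h d : Defs.coefp (dpoly h) (toexp (val d)) = h d.
Proof.
rewrite coef_dpoly (eq_bigl (pred1 d)) ?big_pred1_eq // => d'.
by apply/eqP/eqP => [/toexp_inj/val_inj|->].
Qed.

Lemma coef_dpoly_support h e : Defs.coefp (dpoly h) e != 0 ->
  exists2 d, e = toexp (val d) & h d != 0.
Proof.
rewrite coef_dpoly => /eqP nz.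
case: (pickP (fun d => (toexp (val d) == e) && (h d != 0))) => [d|none].
  by case/andP=> /eqP <- hd; exists d.
case: nz; apply: big1 => d de; apply/eqP.
by move: (none d); rewrite de /= => /negbFE.
Qed.

Lemma peval_dpoly h (w : Om F N) :
  peval (dpoly h) w = \sum_d h d * mon w (val d).
Proof.
rewrite /peval big_map big_enum /= (eq_bigl xpredT) => [|d]; last by rewrite inE.
by apply: eq_bigr => d _; congr (_ * _); apply: eq_bigr => i _; rewrite ffunE.
Qed.

Hypotheses (le_tr : transitive le) (le_tot : total le).

Lemma dpoly_LM h d0 : h d0 != 0 ->
  exists2 d, h d != 0 & is_LM le (dpoly h) (toexp (val d)).
Proof.
move=> hd0; pose supp := [seq d <- enum [set: DT le Psi] | h d != 0].
have [|dm] := exists_max (fun d => toexp (val d)) le_tr le_tot (x0 := d0) (s := supp).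
  by rewrite mem_filter hd0 mem_enum inE.
rewrite mem_filter => /andP [hdm _] dmax; exists dm => //.
split=> [|e /coef_dpoly_support [d -> hd]]; first by rewrite coef_dpoly_val.
by apply: dmax; rewrite mem_filter hd mem_enum inE.
Qed.

(* Defining property of the delta set: no nonzero polynomial supported on D
   vanishes on Psi, since its leading monomial would lie outside D. *)
Lemma dpoly_vanishes_eq0 h : vanishes Psi (dpoly h) -> forall d, h d = 0.
Proof.
move=> van d0; apply/eqP; apply: contraT => hd0.
have [dm _ LM] := dpoly_LM hd0.
move: (valP dm); rewrite /Dset inE /pbool.
by case: excluded_middle_informative => // -[]; exists (dpoly h).
Qed.

End DeltaPolynomials.

Section ProperTransform.
Variables (F : finFieldType) (N : nat) (le : rel (mexp N)) (Psi : {set Om F N})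
  (G : seq (mpoly F N)) (v : A F N -> DT le Psi -> F).
Hypothesis G_groebner : groebner le Psi G.
Hypothesis v_remainder :
  forall a : A F N, is_remainder le G (monom F (toexp a)) (rempoly v a).
Implicit Types (c : PsiT Psi -> F) (h : DT le Psi -> F).

(* On Psi the remainder of x^a takes the same values as x^a, because
   x^a - remainder is a combination of elements of Z_Psi. *)
Lemma remainder_eval (a : A F N) (w : Om F N) :
  w \in Psi -> peval (dpoly (v a)) w = mon w a.
Proof.
move=> wPsi; have [[qs _ coef_eq] _] := v_remainder a.
have [G_van _ _] := G_groebner.
have lin0 : peval (lincomb qs G) w = 0.
  by apply: peval_lincomb => g /G_van; apply.
change (peval (rempoly v a) w = mon w a).
have := peval_eqcoef w coef_eq; rewrite peval_cat lin0 add0r => <-.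
rewrite /peval /monom big_seq1 mul1r.
by apply: eq_bigr => i _; rewrite ffunE.
Qed.

Lemma Ext_Proper c (a : A F N) :
  Ext v (Proper c) a = \sum_(s : PsiT Psi) c s * mon (val s) a.
Proof.
rewrite /Ext /Proper; under eq_bigr do rewrite mulr_sumr.
rewrite exchange_big /=; apply: eq_bigr => s _.
rewrite -(remainder_eval a (valP s)) peval_dpoly mulr_sumr.
by apply: eq_bigr => d _; rewrite mulrCA.
Qed.

Lemma IDFT_Ext_Proper c (w : Om F N) :
  IDFT (Ext v (Proper c)) w = \sum_(s : PsiT Psi) c s * (val s == w)%:R.
Proof.
rewrite (IDFT_ext w (Ext_Proper c)) IDFT_sum.
by apply: eq_bigr => s _; rewrite IDFT_mon.
Qed.

Lemma Cmap_Proper c (s : PsiT Psi) : Cmap v (Proper c) s = c s.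
Proof.
rewrite /Cmap /Restr IDFT_Ext_Proper (bigD1 s) //= eqxx mulr1.
rewrite big1 ?addr0 // => s' s's.
by rewrite (inj_eq val_inj) (negbTE s's) mulr0.
Qed.

Lemma Cmap_ext h1 h2 (s : PsiT Psi) :
  (forall d, h1 d = h2 d) -> Cmap v h1 s = Cmap v h2 s.
Proof.
move=> eq_h; rewrite /Cmap /Restr; apply: IDFT_ext => a.
by apply: eq_bigr => d _; rewrite eq_h.
Qed.

Lemma Cmap_linear (k : F) h1 h2 (s : PsiT Psi) :
  Cmap v (fun d => k * h1 d + h2 d) s = k * Cmap v h1 s + Cmap v h2 s.
Proof.
rewrite /Cmap /Restr -IDFT_lin; apply: IDFT_ext => a.
by rewrite /Ext mulr_sumr -big_split; apply: eq_bigr => d _ /=; ring.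
Qed.

Hypotheses (le_tr : transitive le) (le_tot : total le).

(* P is surjective: it is injective (C o P = id), and #|V_D| <= #|V_Psi|
   because evaluating sum_d h_d x^d on Psi is injective on V_D. *)
Lemma Proper_surj h : exists c, forall d, Proper c d = h d.
Proof.
pose P (c : {ffun PsiT Psi -> F}) : {ffun DT le Psi -> F} :=
  [ffun d => Proper c d].
pose E (h : {ffun DT le Psi -> F}) := [ffun s : PsiT Psi => peval (dpoly h) (val s)].
have P_inj : injective P.
  move=> c1 c2 /ffunP eq_P; apply/ffunP => s.
  rewrite -(Cmap_Proper c1) -(Cmap_Proper c2); apply: Cmap_ext => d.
  by have := eq_P d; rewrite !ffunE.
have E_inj : injective E.
  move=> h1 h2 /ffunP eq_E; apply/ffunP => d; apply/eqP; rewrite -subr_eq0.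
  apply/eqP; apply: (@dpoly_vanishes_eq0 _ _ _ _ le_tr le_tot (fun d => h1 d - h2 d)).
  move=> w wPsi; have := eq_E (exist _ w wPsi); rewrite !ffunE /= !peval_dpoly.
  by move=> eq_sum; under eq_bigr do rewrite mulrBl; rewrite sumrB eq_sum subrr.
have [Pinv _ PK] := inj_card_bij P_inj (leq_card E E_inj).
exists (Pinv [ffun d => h d]) => d.
by have /ffunP/(_ d) := PK [ffun d => h d]; rewrite !ffunE.
Qed.

(* P o C = id: write h = P c, then C h = C (P c) = c. *)
Lemma Proper_Cmap h d : Proper (Cmap v h) d = h d.
Proof.
have [c Pc] := Proper_surj h.
rewrite -Pc /Proper; apply: eq_bigr => s _.
by rewrite -(Cmap_Proper c s); congr (_ * _); apply: Cmap_ext.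
Qed.

(* Every vector of F^{-1}(E(V_D)) is the extension by zero of a vector on
   Psi, so it vanishes off Psi. *)
Lemma IDFT_Ext_vanish h (w : Om F N) : w \notin Psi -> IDFT (Ext v h) w = 0.
Proof.
move=> wPsi; have [c Pc] := Proper_surj h.
rewrite (@IDFT_ext _ _ _ (Ext v (Proper c))) => [|a]; last first.
  by apply: eq_bigr => d _; rewrite Pc.
rewrite IDFT_Ext_Proper big1 // => s _.
by rewrite (introF eqP) ?mulr0 // => sw; case/negP: wPsi; rewrite -sw (valP s).
Qed.

End ProperTransform.

Theorem mainTheorem6 (F : finFieldType) (N : nat) (le : rel (mexp N))
    (Psi : {set Om F N}) (G : seq (mpoly F N))
    (v : A F N -> DT le Psi -> F) :
  (0 < N)%N ->
  monomial_order le ->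
  Psi != set0 ->
  groebner le Psi G ->
  (forall a : A F N, is_remainder le G (monom F (toexp a)) (rempoly v a)) ->
  [/\ (* C is F_q-linear *)
      (forall (k : F) (h1 h2 : DT le Psi -> F) (s : PsiT Psi),
          Cmap v (fun d => k * h1 d + h2 d) s = k * Cmap v h1 s + Cmap v h2 s),
      (* C o P = id *)
      (forall (c : PsiT Psi -> F) (s : PsiT Psi), Cmap v (Proper c) s = c s),
      (* P o C = id *)
      (forall (h : DT le Psi -> F) (d : DT le Psi), Proper (Cmap v h) d = h d)
    & (* F^{-1}(E(V_D)) vanishes outside Psi *)
      (forall (h : DT le Psi -> F) (w : Om F N),
          w \notin Psi -> IDFT (Ext v h) w = 0)].
Proof.
move=> _ [_ _ le_tr le_tot _] _ G_groebner v_remainder; split.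
- exact: Cmap_linear.
- exact: Cmap_Proper G_groebner v_remainder.
- exact: Proper_Cmap G_groebner v_remainder le_tr le_tot.
- exact: IDFT_Ext_vanish G_groebner v_remainder le_tr le_tot.
Qed.
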